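(* Let $k\ge 3$. (a) For every finite field $F$, every subgroup $\Phi\le F^*$ of order $k$ and every generator $\varphi$ of $\Phi$, one has $\mathcal{O}(\mathbb{C},k)\subseteq\mathcal{O}_\varphi(F,k)$. (b) The set $\mathcal{Q}_k$ of exceptional primes is finite.
   Context: Notation: $\mathbf{k}=\{1,\dots,k-1\}$, $\mathbf{k}_0=\{0,1,\dots,k-1\}$. For a field $F$, a subgroup $\Phi\le F^*$ of order $k$ and a generator $\varphi$ of $\Phi$: a quadruple $(i,j\mid s,t)$ with $i,j,s,t\in\mathbf{k}$ and $i\neq s$ is an overlap (with respect to $\varphi$) if there is $\omega\in\mathbf{k}_0$ with $\varphi^\omega(\varphi^j-1)(\varphi^s-1)=(\varphi^i-1)(\varphi^t-1)$. The overlap is trivial if at least one of $i\equiv\pm j$, $j\equiv\pm t$, $t\equiv\pm s$, $s\equiv\pm i\pmod k$ holds, and nontrivial otherwise. $\mathcal{O}_\varphi(F,k)$ is the set of nontrivial overlaps. For $F=\mathbb{C}$ take $\Phi=\{z\in\mathbb{C}:z^k=1\}$ and $\varphi=\exp(2\pi\mathrm{i}/k)$, and write $\mathcal{O}(\mathbb{C},k)$. The set $\mathcal{Q}_k$ of exceptional primes is the set of primes $p$ such that $p\mid k$, or there exist a finite field $F$ of characteristic $p$, a subgroup $\Phi\le F^*$ of order $k$ and a generator $\varphi$ of $\Phi$ with $\mathcal{O}_\varphi(F,k)\neq\mathcal{O}(\mathbb{C},k)$. *)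

From HB Require Import structures.
From mathcomp Require Import all_boot all_order all_algebra all_field.
Set Implicit Arguments. Unset Strict Implicit. Unset Printing Implicit Defensive.
Import Order.TTheory GRing.Theory Num.Theory.
Local Open Scope ring_scope.

Definition pm_congr (k a b : nat) : bool :=
  (a == b %[mod k])%N || (a + b == 0 %[mod k])%N.

Definition overlap (R : comNzRingType) (phi : R) (k i j s t : nat) : Prop :=
  [/\ [&& (0 < i < k)%N, (0 < j < k)%N, (0 < s < k)%N & (0 < t < k)%N], i != s &
   (exists2 w : nat, (w < k)%N &
     phi ^+ w * (phi ^+ j - 1) * (phi ^+ s - 1) = (phi ^+ i - 1) * (phi ^+ t - 1))].

Definition trivial_quad (k i j s t : nat) : bool :=
  [|| pm_congr k i j, pm_congr k j t, pm_congr k t s | pm_congr k s i].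

(* membership in O_phi(F,k) *)
Definition nt_overlap (R : comNzRingType) (phi : R) (k i j s t : nat) : Prop :=
  overlap phi k i j s t /\ ~~ trivial_quad k i j s t.

(* exp(2 pi i / k) in algC: k.-root (-1) is the k-th root of -1 with nonnegative
   imaginary part and maximal real part, i.e. exp(i pi / k). *)
Definition zetaC (k : nat) : algC := (k.-root (-1)) ^+ 2.

(* membership in O(C,k) *)
Definition nt_overlapC (k i j s t : nat) : Prop := nt_overlap (zetaC k) k i j s t.

(* p is in Q_k *)
Definition exceptional_prime (k p : nat) : Prop :=
  prime p /\
  ((p %| k)%N \/
   exists (F : finFieldType) (phi : F),
     p \in [pchar F] /\ k.-primitive_root phi /\
     ~ (forall i j s t : nat, nt_overlap phi k i j s t <-> nt_overlapC k i j s t)).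

From HB Require Import structures.
From mathcomp Require Import all_boot all_order all_algebra all_field.
From mathcomp Require Import ring lra.
Set Implicit Arguments. Unset Strict Implicit. Unset Printing Implicit Defensive.
Import Order.TTheory GRing.Theory Num.Theory.
Local Open Scope ring_scope.

(* An overlap (i,j|s,t) with witness w says that x = phi is a root of the integer
   polynomial overlap_poly w i j s t.  Both parts follow from the arithmetic of
   the cyclotomic polynomial 'Phi_k, which is the minimal polynomial over Q of
   zetaC k = exp(2 pi i / k):
   (a) an integer polynomial vanishing at zetaC k is a multiple of the monic
       'Phi_k in Z[X], and 'Phi_k vanishes at every primitive k-th root of unity
       of every field;
   (b) if it does not vanish at zetaC k, a Bezout relation U 'Phi_k + V P = c
       with 0 <> c in Z shows that it can vanish at a primitive k-th root only in
       characteristic dividing c; there are finitely many quintuples (w,i,j,s,t).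
   The first half of the file identifies zetaC k, defined through the principal
   k-th root of -1 in algC, as a primitive k-th root of unity.  Since algC has no
   trigonometry, this is done with elementary plane geometry on the unit circle:
   rotating clockwise by that root y, every point of the upper half circle is
   eventually brought into the arc between 1 and y, which forces y to generate
   all 2k-th roots of unity. *)

(* Plane geometry on the upper unit half circle: for points (a,b) and (c,s) with
   c <= a, the rotation of (c,s) by -arg(a,b) stays in the upper half plane and,
   if (a,b) <> (1,0), strictly increases the abscissa. *)
Section UpperCircleRotation.
Variables (R : realFieldType) (a b c s : R).
Hypotheses (ab1 : a ^+ 2 + b ^+ 2 = 1) (cs1 : c ^+ 2 + s ^+ 2 = 1).
Hypotheses (b_ge0 : 0 <= b) (s_ge0 : 0 <= s).

(* The inner product of two unit vectors is at least -1, as |u + v|^2 >= 0. *)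
Lemma upper_circle_dot_ge : 0 <= 1 + (a * c + b * s).
Proof.
have e : (a + c) ^+ 2 + (b + s) ^+ 2
       = (a ^+ 2 + b ^+ 2) + (c ^+ 2 + s ^+ 2) + 2%:R * (a * c + b * s) by ring.
have : 0 <= (a + c) ^+ 2 + (b + s) ^+ 2 by rewrite addr_ge0 ?sqr_ge0.
by rewrite e ab1 cs1; lra.
Qed.

(* The rotated point (ca + sb, sa - cb) is in the upper half plane; this follows
   from (sa - cb)(b + s) = (a - c)(1 + ac + bs). *)
Lemma upper_circle_cross_ge : c <= a -> 0 <= s * a - c * b.
Proof.
move=> ca.
have cross_id : (s * a - c * b) * (b + s) = (a - c) * (1 + (a * c + b * s)).
  transitivity ((a - c) * (1 + (a * c + b * s))
                + a * (c ^+ 2 + s ^+ 2 - 1) - c * (a ^+ 2 + b ^+ 2 - 1)); first ring.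
  by rewrite ab1 cs1 subrr !mulr0 addr0 subr0.
have [/eqP|bs0] := eqVneq (b + s) 0.
  by rewrite paddr_eq0 // => /andP[/eqP-> /eqP->]; rewrite !mul0r mulr0 subr0.
rewrite -(pmulr_lge0 _ (_ : 0 < b + s)) ?lt0r ?bs0 ?addr_ge0 //.
by rewrite cross_id mulr_ge0 ?subr_ge0 ?upper_circle_dot_ge.
Qed.

(* The rotated point has a larger abscissa; for b > 0 this follows from
   (ca + sb - c)(1 + a) = b (s + (sa - cb)), and b = 0 forces a = -1. *)
Lemma upper_circle_dot_gt : c <= a -> a < 1 -> c < c * a + s * b.
Proof.
move=> ca a1.
have [b0|bn0] := eqVneq b 0.
  have an1 : a = -1.
    have : (a - 1) * (a + 1) = 0.
      by transitivity (a ^+ 2 + b ^+ 2 - 1); [rewrite b0; ring | rewrite ab1 subrr].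
    by move/eqP; rewrite mulf_eq0 subr_eq0 addr_eq0 (lt_eqF a1) => /eqP.
  by rewrite b0 an1 mulr0 addr0 in ca *; lra.
have b_gt0 : 0 < b by rewrite lt0r bn0.
have a_gtN1 : 0 < 1 + a.
  have : a ^+ 2 < 1 by rewrite -ab1 ltrDl exprn_gt0.
  by nra.
have dot_id : (c * a + s * b - c) * (1 + a) = b * (s + (s * a - c * b)).
  transitivity (b * (s + (s * a - c * b)) + c * (a ^+ 2 + b ^+ 2 - 1)); first ring.
  by rewrite ab1 subrr mulr0 addr0.
rewrite -subr_gt0 -(pmulr_lgt0 _ a_gtN1) dot_id pmulr_rgt0 //.
have cross := upper_circle_cross_ge ca.
have [s0|sn0] := eqVneq s 0; last by rewrite ltr_wpDr // lt0r sn0 s_ge0.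
have c0 : c != 0.
  by apply: contra_eq_neq cs1 => ->; rewrite s0 expr0n /= addr0 eq_sym oner_eq0.
rewrite s0 mul0r sub0r in cross; rewrite s0 mul0r sub0r add0r.
by rewrite lt_def cross andbT oppr_eq0 mulf_neq0.
Qed.

End UpperCircleRotation.

Lemma algR_circle (u : algC) : `|u| = 1 ->
  in_algR (Creal_Re u) ^+ 2 + in_algR (Creal_Im u) ^+ 2 = 1.
Proof.
move=> u1; apply: val_inj.
by rewrite [val _]rmorphD !rmorphXn /= -normC2_Re_Im u1 expr1n.
Qed.

Lemma Re_mul_conj (w y : algC) : 'Re (w * y^*) = 'Re w * 'Re y + 'Im w * 'Im y.
Proof. by rewrite ReM Re_conj Im_conj; ring. Qed.

Lemma Im_mul_conj (w y : algC) : 'Im (w * y^*) = 'Im w * 'Re y - 'Re w * 'Im y.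
Proof. by rewrite ImM Re_conj Im_conj; ring. Qed.

Lemma rotate_upper (y w : algC) : `|y| = 1 -> `|w| = 1 -> 0 <= 'Im y -> 0 <= 'Im w ->
  'Re w <= 'Re y -> 'Re y < 1 -> 0 <= 'Im (w * y^*) /\ 'Re w < 'Re (w * y^*).
Proof.
move=> y1 w1 Imy Imw wy y_lt1.
rewrite Im_mul_conj Re_mul_conj; split.
  exact (upper_circle_cross_ge (algR_circle y1) (algR_circle w1) Imy Imw wy).
exact (upper_circle_dot_gt (algR_circle y1) (algR_circle w1) Imy Imw wy y_lt1).
Qed.

Lemma norm_root_of_unity (u : algC) n : (0 < n)%N -> u ^+ n = 1 -> `|u| = 1.
Proof.
move=> n_gt0 un1; apply/eqP; rewrite -(pexpr_eq1 n_gt0) ?normr_ge0 //.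
by rewrite -normrX un1 normr1.
Qed.

Lemma Re_lt1 (u : algC) : `|u| = 1 -> u != 1 -> 'Re u < 1.
Proof.
move=> u1 un1; have [Re_le eq_Re] := leif_Re_Creal u.
rewrite u1 in Re_le eq_Re; rewrite lt_neqAle Re_le andbT eq_Re.
by apply: contra un1 => u_ge0; rewrite -[u]ger0_norm // u1.
Qed.

Lemma prim_root_of_power (R : idomainType) n (y : R) m : (0 < n)%N ->
  y ^+ n = 1 -> n.-primitive_root (y ^+ m) -> n.-primitive_root y.
Proof.
move=> n_gt0 yn1 prim_ym; have [d prim_y d_dvd_n] := prim_order_exists n_gt0 yn1.
suff -> : n = d by [].
apply/eqP; rewrite eqn_dvd d_dvd_n (prim_order_dvd prim_ym).
by rewrite -exprM mulnC exprM (prim_expr_order prim_y) expr1n eqxx.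
Qed.

Section RotationWalk.
Variables (y g : algC) (N : nat).
Hypotheses (y1 : `|y| = 1) (g1 : `|g| = 1) (Im_y : 0 <= 'Im y) (Im_g : 0 <= 'Im g).
Hypotheses (Re_y : 'Re y < 1) (N_gt0 : (0 < N)%N) (yN : y ^+ N = 1).

Let v j := g * y^* ^+ j.

Lemma walk_norm j : `|v j| = 1.
Proof. by rewrite /v normrM normrX norm_conjC y1 g1 expr1n mulr1. Qed.

Lemma walk_climb j : (forall i, (i < j)%N -> 'Re (v i) <= 'Re y) ->
  0 <= 'Im (v j) /\ ((0 < j)%N -> 'Re g < 'Re (v j)).
Proof.
elim: j => [|j IH] below; first by rewrite /v expr0 mulr1.
have [Im_j Re_j] := IH (fun i lt_ij => below i (ltnW lt_ij)).
have := rotate_upper y1 (walk_norm j) Im_y Im_j (below j (ltnSn j)) Re_y.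
rewrite -mulrA -exprSr => -[Im_Sj lt_Sj]; split => // _.
have [j0|j_gt0] := posnP j; last exact: lt_trans (Re_j j_gt0) lt_Sj.
by move: lt_Sj; rewrite j0 /v expr0 mulr1.
Qed.

(* Since the walk is periodic, it cannot climb forever: it crosses y. *)
Lemma walk_exit : exists m, 'Re y < 'Re (v m) /\ 0 <= 'Im (v m).
Proof.
have [|m Pm m_min] := @ex_minnP (fun j => 'Re y < 'Re (v j)).
  suff /existsP[j Pj] : [exists j : 'I_N, 'Re y < 'Re (v j)] by exists j.
  apply: contraT => /existsPn below.
  have below_all i : (i < N)%N -> 'Re (v i) <= 'Re y.
    by move=> lt_iN; have := below (Ordinal lt_iN); rewrite real_leNgt ?Creal_Re.
  have [_ /(_ N_gt0)] := walk_climb below_all.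
  by rewrite /v -rmorphXn yN rmorph1 mulr1 ltxx.
exists m; split => //; apply: (walk_climb _).1 => i lt_im.
by rewrite real_leNgt ?Creal_Re //; apply/negP => /m_min; rewrite leqNgt lt_im.
Qed.
End RotationWalk.

(* Complex conjugation permutes the primitive n-th roots, so one of them lies in
   the closed upper half plane. *)
Lemma prim_root_upper n : (0 < n)%N ->
  exists g : algC, n.-primitive_root g /\ 0 <= 'Im g.
Proof.
move=> n_gt0; have [g prim_g] := C_prim_root_exists n_gt0.
have [Im_g|Im_g] := boolP (0 <= 'Im g); first by exists g.
exists g^*; rewrite fmorph_primitive_root Im_conj oppr_ge0 ltW //.
by rewrite real_ltNge ?Creal_Im ?rpred0.
Qed.

Lemma prim_root_half (R : idomainType) k (g : R) : (0 < k)%N ->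
  (k * 2).-primitive_root g -> g ^+ k = -1.
Proof.
move=> k_gt0 prim_g; have /eqP := prim_expr_order prim_g; rewrite exprM sqrf_eq1.
case/orP=> /eqP // gk1; have := prim_order_dvd prim_g k; rewrite gk1 eqxx.
by move/(dvdn_leq k_gt0); rewrite leqNgt ltn_Pmulr.
Qed.

Section RootOfMinusOne.
Variables (k : nat) (k_gt1 : (1 < k)%N).
Let y : algC := k.-root (-1).

(* y has the largest real part among all roots of X^k + 1: algC only guarantees
   this among those in the upper half plane, and conjugation covers the rest. *)
Lemma rootN1_Re_max (u : algC) : u ^+ k = -1 -> 'Re u <= 'Re y.
Proof.
move=> uk; have k_gt0 := ltnW k_gt1.
have [Im_u|Im_u] := boolP (0 <= 'Im u); first exact: rootC_Re_max.
rewrite -Re_conj; apply: rootC_Re_max => //; first by rewrite -rmorphXn uk rmorphN1.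
by rewrite Im_conj oppr_ge0 ltW // real_ltNge ?Creal_Im ?rpred0.
Qed.

(* Walk from an upper primitive 2k-th root g by rotations
   of angle -arg(y) until crossing y at w = g * y^*^m.  Maximality of 'Re y
   forces w^k = 1 (m odd), and then w = 1, for otherwise w * y^* would be a root
   of X^k + 1 beyond y.  Hence g = y^m, so y generates the 2k-th roots. *)
Lemma rootN1_prim : (k * 2).-primitive_root y.
Proof.
have k_gt0 := ltnW k_gt1; have N_gt0 : (0 < k * 2)%N by rewrite muln_gt0 k_gt0.
have yk : y ^+ k = -1 by rewrite rootCK.
have y2k : y ^+ (k * 2) = 1 by rewrite exprM yk expr2 mulrNN mulr1.
have y1 := norm_root_of_unity N_gt0 y2k.
have N1_ne1 : (-1 : algC) != 1.
  by rewrite -subr_eq0 -opprD oppr_eq0 (_ : 1 + 1 = 2%:R) // pnatr_eq0.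
have Re_y : 'Re y < 1.
  by apply: Re_lt1 => //; apply: contra_eq_neq yk => ->; rewrite expr1n eq_sym.
have [g [prim_g Im_g]] := prim_root_upper N_gt0.
have g1 := norm_root_of_unity N_gt0 (prim_expr_order prim_g).
have gk := prim_root_half k_gt0 prim_g.
have walk_pow j : (g * y^* ^+ j) ^+ k = - (-1) ^+ j.
  by rewrite exprMn gk -exprM mulnC exprM -rmorphXn yk rmorphN1 mulN1r.
have [m [Re_m Im_m]] :=
  walk_exit y1 g1 (Im_rootC_ge0 (-1) k_gt1) Im_g Re_y N_gt0 y2k.
have w_norm := walk_norm y1 g1 m.
set w := g * y^* ^+ m in Re_m Im_m w_norm walk_pow.
have m_odd : odd m.
  apply: contraT => m_even.
  have wk : w ^+ k = -1 by rewrite /w walk_pow -signr_odd (negbTE m_even) expr0.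
  by have := rootN1_Re_max wk; rewrite real_leNgt ?Creal_Re // Re_m.
have w1 : w = 1.
  apply/eqP; apply: contraT => w_ne1.
  have [_ Re_yw] := rotate_upper w_norm y1 Im_m (Im_rootC_ge0 (-1) k_gt1)
    (ltW Re_m) (Re_lt1 w_norm w_ne1).
  have ywk : (y * w^*) ^+ k = -1.
    by rewrite exprMn yk -rmorphXn /w walk_pow -signr_odd m_odd expr1 opprK rmorph1 mulr1.
  by have := rootN1_Re_max ywk; rewrite real_leNgt ?Creal_Re // Re_yw.
have g_eq : g = y ^+ m.
  have yy : y^* * y = 1 by rewrite mulrC -normCK y1 expr1n.
  by rewrite -[g]mulr1 -(expr1n _ m) -yy exprMn mulrA -/w w1 mul1r.
by rewrite g_eq in prim_g; apply: prim_root_of_power N_gt0 y2k prim_g.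
Qed.
End RootOfMinusOne.

Lemma zetaC_prim k : (1 < k)%N -> k.-primitive_root (zetaC k).
Proof.
move=> k_gt1; have := dvdn_prim_root (rootN1_prim k_gt1) (dvdn_mulr 2 (dvdnn k)).
by rewrite mulKn // ltnW.
Qed.

Local Notation pZtoQ := (map_poly (intr : int -> rat)).
Local Notation pZtoC := (map_poly (intr : int -> algC)).
Local Notation pQtoC := (map_poly (ratr : rat -> algC)).

Definition overlap_poly (w i j s t : nat) : {poly int} :=
  'X^w * ('X^j - 1) * ('X^s - 1) - ('X^i - 1) * ('X^t - 1).

Lemma root_overlap_poly (R : comNzRingType) (x : R) w i j s t :
  root (map_poly intr (overlap_poly w i j s t)) x =
  (x ^+ w * (x ^+ j - 1) * (x ^+ s - 1) == (x ^+ i - 1) * (x ^+ t - 1)).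
Proof.
rewrite /root /overlap_poly rmorphB !rmorphM !rmorphB !rmorph1 !rmorphXn /=.
by rewrite !map_polyX !hornerE subr_eq0.
Qed.

Lemma map_poly_ZQC (p : {poly int}) : pQtoC (pZtoQ p) = pZtoC p.
Proof. by rewrite -map_poly_comp; apply: eq_map_poly => a /=; rewrite rmorph_int. Qed.

(* Irreducibility of the cyclotomic polynomial: over Q, the polynomials vanishing
   at zetaC k are exactly the multiples of 'Phi_k. *)
Lemma root_zetaC_Phi_dvd k (q : {poly rat}) : (1 < k)%N ->
  root (pQtoC q) (zetaC k) = (pZtoQ 'Phi_k %| q).
Proof.
move=> k_gt1; have prim := zetaC_prim k_gt1.
have [p0 [Dp0 _] dvd_p0] := minCpolyP (zetaC k).
suff -> : pZtoQ 'Phi_k = p0 by rewrite dvd_p0.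
apply: (@map_inj_poly _ _ (ratr : rat -> algC)); [exact: fmorph_inj | exact: rmorph0 |].
by rewrite -Dp0 map_poly_ZQC (minCpoly_cyclotomic prim) (Cintr_Cyclotomic prim).
Qed.

Lemma root_Phi_prim (F : fieldType) (phi : F) k : k.-primitive_root phi ->
  root (map_poly intr 'Phi_k) phi.
Proof.
move=> prim_phi; have k_gt0 := prim_order_gt0 prim_phi.
have eval_Xn1 n : (map_poly (intr : int -> F) ('X^n - 1)).[phi] = phi ^+ n - 1.
  by rewrite rmorphB rmorph1 rmorphXn /= map_polyX !hornerE.
have := congr1 (fun p => (map_poly (intr : int -> F) p).[phi]) (prod_Cyclotomic k_gt0).
rewrite /= eval_Xn1 prim_expr_order // subrr rmorph_prod horner_prod => /eqP.
rewrite prodf_seq_eq0 => /hasP[d d_div /= /eqP Phi_d].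
have d_dvd_k : (d %| k)%N by rewrite (dvdn_divisors _ k_gt0).
have d_gt0 : (0 < d)%N := dvdn_gt0 k_gt0 d_dvd_k.
have [<-|d_ne_k] := eqVneq d k; first exact/eqP.
have := congr1 (fun p => (map_poly (intr : int -> F) p).[phi]) (prod_Cyclotomic d_gt0).
rewrite /= eval_Xn1 rmorph_prod horner_prod (big_rem d) -?dvdn_divisors //=.
rewrite Phi_d mul0r => /esym/eqP; rewrite subr_eq0 -(prim_order_dvd prim_phi) => k_dvd_d.
by move: d_ne_k; rewrite eqn_dvd d_dvd_k k_dvd_d.
Qed.

(* An integer polynomial vanishing at zetaC k is a multiple of 'Phi_k, hence
   vanishes at every primitive k-th root of unity of every field. *)
Lemma root_zetaC_transfer k (P : {poly int}) : (1 < k)%N -> root (pZtoC P) (zetaC k) ->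
  forall (F : fieldType) (phi : F), k.-primitive_root phi -> root (map_poly intr P) phi.
Proof.
move=> k_gt1 P_zeta F phi prim_phi.
have : 'Phi_k %| P by rewrite -dvdp_rat_int -root_zetaC_Phi_dvd // map_poly_ZQC.
rewrite Pdiv.Idomain.dvdp_eq (monicP (Cyclotomic_monic k)) expr1n scale1r => /eqP->.
by rewrite rmorphM rootM root_Phi_prim ?orbT.
Qed.

Lemma coprime_Phi_nonroot k (q : {poly rat}) : (1 < k)%N ->
  ~~ root (pQtoC q) (zetaC k) -> coprimep (pZtoQ 'Phi_k) q.
Proof.
move=> k_gt1 q_zeta; apply/coprimepP => d /dvdpP[h Phi_eq] d_q.
have Phi_nz : pZtoQ 'Phi_k != 0.
  by rewrite -size_poly_eq0 size_rat_int_poly size_poly_eq0 monic_neq0 ?Cyclotomic_monic.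
have /norP[h_nz d_nz] : ~~ ((h == 0) || (d == 0)) by rewrite -mulf_eq0 -Phi_eq.
have d_zeta : ~~ root (pQtoC d) (zetaC k).
  apply: contra q_zeta; rewrite !root_zetaC_Phi_dvd // => Phi_d.
  exact: dvdp_trans Phi_d d_q.
have : root (pQtoC h) (zetaC k).
  have := dvdpp (pZtoQ 'Phi_k); rewrite -root_zetaC_Phi_dvd // Phi_eq rmorphM rootM.
  by rewrite (negbTE d_zeta) orbF.
rewrite root_zetaC_Phi_dvd // => /(dvdp_leq h_nz).
rewrite Phi_eq size_mul // -size_poly_eq1 => le_size.
have d_size_gt0 : (0 < size d)%N by rewrite size_poly_gt0.
apply/eqP; move: le_size d_size_gt0; case: (size d) => [|[|n]] //=.
by rewrite !addnS /= ltnNge leq_addr.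
Qed.

Lemma int_Bezout_Phi k (P : {poly int}) : (1 < k)%N -> ~~ root (pZtoC P) (zetaC k) ->
  exists2 c : int, c != 0 & exists U V : {poly int}, U * 'Phi_k + V * P = c%:P.
Proof.
move=> k_gt1 P_zeta.
have cop : coprimep (pZtoQ 'Phi_k) (pZtoQ P).
  by apply: coprime_Phi_nonroot; rewrite // map_poly_ZQC.
have [[u v] /= Bezout_uv] := Bezout_eq1_coprimepP _ _ cop.
have [U [a a_nz Du]] := rat_poly_scale u.
have [V [b b_nz Dv]] := rat_poly_scale v.
exists (a * b); first by rewrite mulf_neq0.
exists (b *: U), (a *: V).
apply: (@map_inj_poly _ _ (intr : int -> rat)); [exact: intr_inj | exact: rmorph0 |].
have eU : pZtoQ U = a%:~R *: u by rewrite Du scalerA mulfV ?intr_eq0 // scale1r.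
have eV : pZtoQ V = b%:~R *: v by rewrite Dv scalerA mulfV ?intr_eq0 // scale1r.
rewrite rmorphD !rmorphM /= !map_polyZ /= eU eV map_polyC /= -!mul_polyC.
transitivity ((a%:~R * b%:~R)%:P * (u * pZtoQ 'Phi_k + v * pZtoQ P) : {poly rat}).
  by rewrite !polyCM; ring.
by rewrite Bezout_uv mulr1 polyCM map_polyC.
Qed.

Lemma nonroot_char_bounded k (P : {poly int}) : (1 < k)%N ->
  ~~ root (pZtoC P) (zetaC k) ->
  exists M, forall (F : fieldType) (phi : F) p, p \in [pchar F] ->
    k.-primitive_root phi -> root (map_poly intr P) phi -> (p < M)%N.
Proof.
move=> k_gt1 P_zeta; have [c c_nz [U [V Bezout_UV]]] := int_Bezout_Phi k_gt1 P_zeta.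
exists `|c|.+1 => F phi p pF prim_phi /eqP P_phi; rewrite ltnS.
have := congr1 (fun q => (map_poly (intr : int -> F) q).[phi]) Bezout_UV.
have /eqP Phi_phi := root_Phi_prim prim_phi.
rewrite /= rmorphD !rmorphM /= !hornerE Phi_phi P_phi !mulr0 addr0 map_polyC hornerC /=.
move/esym/eqP => c_F; have : ((`|c|%N)%:R : F) == 0.
  by case: c c_nz c_F {Bezout_UV} => n _; rewrite ?NegzE ?mulrNz ?oppr_eq0.
by rewrite -(dvdn_pcharf pF); apply: dvdn_leq; rewrite absz_gt0.
Qed.

(* Part (a): overlaps of C are overlaps of every field (with a primitive k-th
   root of unity), since the overlap equation is a polynomial relation over Z. *)
Lemma overlapC_overlap k (F : fieldType) (phi : F) i j s t : (1 < k)%N ->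
  k.-primitive_root phi -> nt_overlapC k i j s t -> nt_overlap phi k i j s t.
Proof.
move=> k_gt1 prim_phi [[range i_ne_s [w w_lt eq_zeta]] nontriv].
split=> //; split=> //; exists w => //; apply/eqP; rewrite -root_overlap_poly.
by apply: (root_zetaC_transfer k_gt1) prim_phi; rewrite root_overlap_poly eq_zeta.
Qed.

Definition spurious_char k (P : {poly int}) (p : nat) : Prop :=
  ~~ root (pZtoC P) (zetaC k) /\
  exists (F : fieldType) (phi : F),
    [/\ p \in [pchar F], k.-primitive_root phi & root (map_poly intr P) phi].

Lemma spurious_char_bounded k (P : {poly int}) : (1 < k)%N ->
  exists M, forall p, spurious_char k P p -> (p < M)%N.
Proof.
move=> k_gt1; have [P_zeta|P_zeta] := boolP (root (pZtoC P) (zetaC k)).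
  by exists 0%N => p [/negP].
have [M bound] := nonroot_char_bounded k_gt1 P_zeta.
by exists M => p [_ [F [phi [pF prim_phi P_phi]]]]; apply: bound prim_phi P_phi.
Qed.

Lemma bounded_union n (B : nat -> nat -> Prop) :
  (forall x, (x < n)%N -> exists M, forall p, B x p -> (p < M)%N) ->
  exists M, forall p, (exists2 x, (x < n)%N & B x p) -> (p < M)%N.
Proof.
elim: n => [|n IH] bounded; first by exists 0%N => p [].
have [M1 bound1] := IH (fun x lt_xn => bounded x (ltnW lt_xn)).
have [M2 bound2] := bounded n (ltnSn n).
exists (maxn M1 M2) => p [x]; rewrite ltnS leq_eqVlt leq_max => /orP[/eqP-> Bp|lt_xn Bp].
  by rewrite bound2 ?orbT.
by rewrite bound1 //; exists x.
Qed.

(* Part (b): a prime at which some overlap appears that does not exist over C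
   is a spurious characteristic of one of the finitely many overlap polynomials. *)
Lemma exceptional_primes_bounded k : (1 < k)%N ->
  exists N, forall p, exceptional_prime k p -> (p < N)%N.
Proof.
move=> k_gt1.
have [M bound] : exists M, forall p,
    (exists2 w, (w < k)%N & exists2 i, (i < k)%N & exists2 j, (j < k)%N &
     exists2 s, (s < k)%N & exists2 t, (t < k)%N &
     spurious_char k (overlap_poly w i j s t) p) -> (p < M)%N.
  do 5![apply: bounded_union => ? _]; exact: spurious_char_bounded.
exists (maxn k.+1 M) => p [_ [p_dvd_k | [F [phi [pF [prim_phi differ]]]]]].
  by rewrite leq_max ltnS dvdn_leq ?(ltnW k_gt1).
rewrite leq_max; apply/orP; right; rewrite ltnNge; apply/negP => M_le_p.
apply: differ => i j s t; split; last exact: overlapC_overlap.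
move=> [[range i_ne_s [w w_lt eq_phi]] nontriv]; split=> //; split=> //.
exists w => //; apply/eqP; rewrite -root_overlap_poly; apply: contraT => P_zeta.
have /and4P[/andP[_ i_lt] /andP[_ j_lt] /andP[_ s_lt] /andP[_ t_lt]] := range.
move: M_le_p; rewrite leqNgt bound //; exists w => //; exists i => //.
exists j => //; exists s => //; exists t => //; split => //.
by exists F, phi; split; rewrite // root_overlap_poly eq_phi.
Qed.

Theorem theorem9 (k : nat) (hk : (3 <= k)%N) :
  (forall (F : finFieldType) (phi : F), k.-primitive_root phi ->
     forall i j s t : nat, nt_overlapC k i j s t -> nt_overlap phi k i j s t)
  /\ (exists N : nat, forall p : nat, exceptional_prime k p -> (p < N)%N).
Proof.
have k_gt1 : (1 < k)%N by apply: leq_trans hk.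
split; last exact: exceptional_primes_bounded.
by move=> F phi prim_phi i j s t; apply: overlapC_overlap.
Qed.
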